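(* Consider a discrete-time control system $\mathbf{x}_{k+1}=f(\mathbf{x}_k,\mathbf{u}_k)$ with state $\mathbf{x}_k\in\mathcal{X}\subset\mathbb{R}^n$, control $\mathbf{u}_k\in\mathcal{U}\subset\mathbb{R}^m$, and $f$ locally Lipschitz. Let $h:\mathcal{X}\times\mathcal{O}\to\mathbb{R}$ be a continuous function of the robot state and the obstacle state, let $h_k:=h(\mathbf{x}_k,\hat{\mathbf{x}}^o_k)$ where $\hat{\mathbf{x}}^o_k$ is the (deterministic) estimated obstacle state at time $k$, and let $h_{k+1}:=h(\mathbf{x}_{k+1},\mathbf{x}^o_{k+1})$, which is a random variable because the next obstacle state $\mathbf{x}^o_{k+1}$ is random. Let $\mathcal{S}=\{\mathbf{x}_k\in\mathcal{X}: h(\mathbf{x}_k,\hat{\mathbf{x}}^o_k)\ge 0\}$. Fix $\beta_u\in(0,1)$ and $\gamma\in(0,1]$. For $\beta\in(0,1)$ let $\mathcal{U}^k_\beta=\{\mathbf{u}_k\in\mathcal{U}:\operatorname{CVaR}^k_\beta(h_{k+1})\ge(1-\gamma)h_k\}$, and define the adaptive risk level $\beta_k:=\min\{\beta\in(0,\beta_u]:\mathcal{U}^k_\beta\neq\emptyset\}$. Suppose $h$ is a risk adaptive CVaR barrier function, i.e., for each $\mathbf{x}_k\in\mathbb{R}^n$ there exists $\mathbf{u}_k\in\mathbb{R}^m$ such that $\operatorname{CVaR}^k_{\beta_k}(h_{k+1})\ge(1-\gamma)h_k$. Then $\mathcal{S}$ is at least CVaR-safe with respect to the risk level $\beta_u$,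 i.e., the solutions of the system starting at $\mathbf{x}_0\in\mathcal{S}$ satisfy $\operatorname{CVaR}^{0:k}_{\beta_u}(h_k)\ge 0$ for all $k\ge 0$.
   Context: For a real random variable $Z$ and $\beta\in(0,1)$: $\operatorname{VaR}_\beta(Z)=\sup\{\zeta\in\mathbb{R}:\mathbb{P}(Z\ge\zeta)\ge 1-\beta\}$ and $\operatorname{CVaR}_\beta(Z)=\mathbb{E}[Z\mid Z\le \operatorname{VaR}_\beta(Z)]$, equivalently $\operatorname{CVaR}_\beta(Z)=-\inf_{\zeta\in\mathbb{R}}\mathbb{E}[\zeta+(-Z-\zeta)_+/\beta]$ with $(\cdot)_+=\max\{\cdot,0\}$. $\operatorname{CVaR}^k_\beta$ denotes this CVaR operator applied at time step $k$ (conditional on the information at time $k$), and the cumulative (dynamic) risk measure is the composition $\operatorname{CVaR}^{0:k}_\beta:=\operatorname{CVaR}^0_\beta\circ\operatorname{CVaR}^1_\beta\circ\cdots\circ\operatorname{CVaR}^k_\beta$. The solutions of the system starting at $\mathbf{x}_0\in\mathcal{S}$ are called CVaR-safe (at risk level $\beta$) if $\operatorname{CVaR}^{0:k}_\beta(h_k)\ge 0$ for all $k\ge0$. *)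

From HB Require Import structures.
From mathcomp Require Import all_boot all_order all_algebra.
From mathcomp Require Import all_classical all_reals all_analysis.
Set Implicit Arguments. Unset Strict Implicit. Unset Printing Implicit Defensive.
Import Order.TTheory GRing.Theory Num.Theory numFieldNormedType.Exports.
Local Open Scope classical_set_scope.
Local Open Scope ring_scope.

(* Model: the randomness is an i.i.d. noise sequence
   w_1, w_2, ... drawn from the probability P on Omega; the information at
   time k is the history of the first k noise values, stored newest first
   as a list [w_k; ...; w_1].  Every quantity at time k is a function of
   such a history. *)

Section CVaR.
Context {R : realType} {d : measure_display} {Omega : measurableType d}.
Variable P : probability Omega R.

Definition CVaR (beta : R) (Z : Omega -> \bar R) : \bar R :=
  (- ereal_inf [set (z%:E + (beta^-1)%:E * \int[P]_w maxe (- Z w - z%:E) 0%E)%E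
               | z in [set: R]])%E.

(* CVaR^k: the CVaR at time k, conditional on the history s of length k;
   it acts on a quantity V defined on histories of length k+1. *)
Definition cvar_step (beta : R) (V : seq Omega -> \bar R) : seq Omega -> \bar R :=
  fun s => CVaR beta (fun w => V (w :: s)).

(* CVaR^{0:k}_beta(Z_k) = CVaR^0 o CVaR^1 o ... o CVaR^k (Z_k), where Z_k is a
   quantity known at time k (a function of histories of length k), regarded
   as a random variable on the (k+1)-step space (constant in w_{k+1}). *)
Definition dyn_CVaR (beta : R) (k : nat) (Z : seq Omega -> R) : \bar R :=
  iter k.+1 (cvar_step beta) (fun s => (Z (behead s))%:E) [::].
End CVaR.

Section System.
Context {R : realType} {Omega : Type} {n m : nat}.

Fixpoint traj (f : 'rV[R]_n -> 'rV[R]_m -> 'rV[R]_n) (pol : seq Omega -> 'rV[R]_m)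
  (x0 : 'rV[R]_n) (s : seq Omega) : 'rV[R]_n :=
  match s with
  | [::] => x0
  | _ :: s' => f (traj f pol x0 s') (pol s')
  end.
End System.

Definition locally_lipschitz {R : realType} {n m : nat}
  (D : set ('rV[R]_n * 'rV[R]_m)) (f : 'rV[R]_n -> 'rV[R]_m -> 'rV[R]_n) : Prop :=
  forall z, D z -> exists r L : R, 0 < r /\
    forall z1 z2, D z1 -> D z2 ->
      `|z1.1 - z.1| < r -> `|z1.2 - z.2| < r ->
      `|z2.1 - z.1| < r -> `|z2.2 - z.2| < r ->
      `|f z1.1 z1.2 - f z2.1 z2.2| <= L * (`|z1.1 - z2.1| + `|z1.2 - z2.2|).

Section Adaptive.
Context {R : realType} {d : measure_display} {Omega : measurableType d}
  {n m p : nat}.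
Variables (P : probability Omega R) (Ucal : set 'rV[R]_m)
  (f : 'rV[R]_n -> 'rV[R]_m -> 'rV[R]_n) (h : 'rV[R]_n -> 'rV[R]_p -> R)
  (obs : seq Omega -> 'rV[R]_p) (gamma : R).

Definition h_next (x : 'rV[R]_n) (u : 'rV[R]_m) (s : seq Omega) : Omega -> \bar R :=
  fun w => (h (f x u) (obs (w :: s)))%:E.

Definition U_beta (beta : R) (x : 'rV[R]_n) (s : seq Omega) : set 'rV[R]_m :=
  [set u | Ucal u /\ (((1 - gamma) * h x (obs s))%:E <= CVaR P beta (h_next x u s))%E].

Definition is_adaptive_level (beta_u b : R) (x : 'rV[R]_n) (s : seq Omega) : Prop :=
  [/\ 0 < b <= beta_u, U_beta b x s !=set0 &
      forall beta, 0 < beta <= beta_u -> U_beta beta x s !=set0 -> b <= beta].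
End Adaptive.

(* Both monotonicity properties of CVaR (in the random variable and in the
   risk level) let the barrier condition at the adaptive level beta_k <= beta_u
   be read at level beta_u:  (1 - gamma) h_k <= CVaR^k_{beta_u}(h_{k+1}).
   Iterating through the nested risk measure, using that CVaR dominates
   constants and is positively homogeneous, gives
   (1 - gamma)^k h_0 <= CVaR^{0:k}_{beta_u}(h_k), and h_0 >= 0. *)

From HB Require Import structures.
From mathcomp Require Import all_boot all_order all_algebra.
From mathcomp Require Import all_classical all_reals all_analysis.
Import Order.TTheory GRing.Theory Num.Theory numFieldNormedType.Exports.
Local Open Scope classical_set_scope.
Local Open Scope ring_scope.

Section CVaR_properties.
Context {R : realType} {d : measure_display} {Omega : measurableType d}.
Variable P : probability Omega R.
Local Open Scope ereal_scope.

(* No measurability is needed: the integral of a nonnegative function is the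
   supremum of the integrals of the simple functions below it. *)
Lemma ge0_le_integralT (f g : Omega -> \bar R) : (forall w, 0 <= f w) ->
  (forall w, f w <= g w) -> \int[P]_w f w <= \int[P]_w g w.
Proof.
move=> f0 fg.
rewrite !ge0_integralTE //; last by move=> w; exact: le_trans (f0 w) (fg w).
apply: ereal_sup_le => _ [s sf <-]; exists s => // w.
exact: le_trans (sf w) (fg w).
Qed.

Lemma le_CVaR beta (Z1 Z2 : Omega -> \bar R) : (0 <= beta)%R ->
  (forall w, Z1 w <= Z2 w) -> CVaR P beta Z1 <= CVaR P beta Z2.
Proof.
move=> beta0 Z12; rewrite /CVaR leeNl oppeK.
apply: le_ereal_inf_tmp => _ [z _ <-]; apply: ge_ereal_inf.
exists (z%:E + beta^-1%:E * \int[P]_w maxe (- Z2 w - z%:E) 0); first by exists z.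
rewrite leeD2l // lee_wpmul2l ?lee_fin ?invr_ge0 //.
apply: ge0_le_integralT => w; first by rewrite (@le_max _ (\bar R)) lexx orbT.
rewrite (@ge_max _ (\bar R)) !(@le_max _ (\bar R)) lexx !orbT andbT.
by rewrite leeD2r // leeN2.
Qed.

Lemma le_CVaR_level b b' (Z : Omega -> \bar R) : (0 < b)%R -> (b <= b')%R ->
  CVaR P b Z <= CVaR P b' Z.
Proof.
move=> b0 bb'; rewrite /CVaR leeNl oppeK.
apply: le_ereal_inf_tmp => _ [z _ <-]; apply: ge_ereal_inf.
exists (z%:E + b'^-1%:E * \int[P]_w maxe (- Z w - z%:E) 0); first by exists z.
rewrite leeD2l //; apply: lee_wpmul2r.
  by apply: integral_ge0 => w _; rewrite (@le_max _ (\bar R)) lexx orbT.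
by rewrite lee_fin lef_pV2 ?posrE //; exact: lt_le_trans bb'.
Qed.

Lemma CVaR_cst_ge beta (r : R) : r%:E <= CVaR P beta (fun _ => r%:E).
Proof.
rewrite /CVaR leeNr; apply: ge_ereal_inf.
exists ((- r)%:E + beta^-1%:E * \int[P]_w maxe (- r%:E - (- r)%:E) 0).
  by exists (- r)%R.
rewrite integral0_eq ?mule0 ?adde0 // => w _.
by rewrite -EFinN -EFinB subrr -EFin_max maxxx.
Qed.

Lemma CVaR_scale_ge beta c (Y : Omega -> R) : (0 <= c)%R ->
  measurable_fun setT Y ->
  c%:E * CVaR P beta (fun w => (Y w)%:E) <= CVaR P beta (fun w => (c * Y w)%:E).
Proof.
move=> c0 mY; have [->|cn0] := eqVneq c 0%R.
  have -> : (fun w => (0 * Y w)%:E) = fun=> 0%R%:E.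
    by apply/funext => w; rewrite mul0r.
  by rewrite mul0e; exact: CVaR_cst_ge.
have c_gt0 : (0 < c)%R by rewrite lt_neqAle eq_sym cn0.
rewrite /CVaR muleN -ereal_inf_pZl // leeN2.
apply: ereal_inf_le_tmp => _ [_ [z _ <-] <-]; exists (c * z)%R => //.
have scale_integral : \int[P]_w maxe (- (c * Y w)%:E - (c * z)%:E) 0 =
    c%:E * \int[P]_w maxe (- (Y w)%:E - z%:E) 0.
  under [in RHS]eq_integral do rewrite -EFinN -EFinB -EFin_max.
  rewrite -ge0_integralZl_EFin //; last 2 first.
  - by move=> w _; rewrite lee_fin le_max lexx orbT.
  - apply/measurable_realfun.measurable_EFinP; apply: measurable_realfun.measurable_maxr => //.
    by apply: measurable_realfun.measurable_funB => //; exact: measurable_realfun.measurable_funN.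
  apply: eq_integral => w _.
  by rewrite -EFinN -EFinB -EFin_max -EFinM maxr_pMr ?ltW // mulr0 mulrBr mulrN.
rewrite scale_integral [in RHS]muleDr // EFinM; congr (_ + _).
by rewrite !muleA (muleC (beta^-1)%:E).
Qed.

Section barrier_decay.
Variables (beta c : R) (V : seq Omega -> R).
Hypotheses (beta_ge0 : (0 <= beta)%R) (c_ge0 : (0 <= c)%R).
Hypothesis V_measurable : forall s, measurable_fun setT (fun w => V (w :: s)).
Hypothesis V_barrier : forall s,
  (c * V s)%:E <= CVaR P beta (fun w => (V (w :: s))%:E).

Lemma iter_cvar_step_ge j s :
  (c ^+ j * V s)%:E <= iter j.+1 (cvar_step P beta) (fun s => (V (behead s))%:E) s.
Proof.
elim: j s => [|j IHj] s; first by rewrite expr0 mul1r; exact: CVaR_cst_ge.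
apply: (@le_trans _ _ (CVaR P beta (fun w => (c ^+ j * V (w :: s))%:E))).
  rewrite exprSr -mulrA EFinM.
  apply: (le_trans _ (CVaR_scale_ge beta _ _ (exprn_ge0 j c_ge0) (V_measurable s))).
  by apply: lee_wpmul2l; [rewrite lee_fin exprn_ge0 | exact: V_barrier].
by apply: le_CVaR => // w; exact: IHj.
Qed.

Lemma dyn_CVaR_ge0 k : (0 <= V [::])%R -> 0 <= dyn_CVaR P beta k V.
Proof.
move=> V0; apply: le_trans (iter_cvar_step_ge k [::]).
by rewrite lee_fin mulr_ge0 // exprn_ge0.
Qed.

End barrier_decay.
End CVaR_properties.

Lemma traj_in {R : realType} {Omega : Type} {n m : nat}
  {X : set 'rV[R]_n} {U : set 'rV[R]_m} {f : 'rV[R]_n -> 'rV[R]_m -> 'rV[R]_n}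
  {pol : seq Omega -> 'rV[R]_m} {x0 : 'rV[R]_n} :
  (forall x u, X x -> U u -> X (f x u)) -> (forall s, U (pol s)) -> X x0 ->
  forall s, X (traj f pol x0 s).
Proof. by move=> fXU polU Xx0; elim=> [|w s IHs] //=; exact: fXU. Qed.

Theorem theorem2 (R : realType) (d : measure_display) (Omega : measurableType d)
  (P : probability Omega R) (n m p : nat)
  (Xcal : set 'rV[R]_n) (Ucal : set 'rV[R]_m) (Ocal : set 'rV[R]_p)
  (f : 'rV[R]_n -> 'rV[R]_m -> 'rV[R]_n) (h : 'rV[R]_n -> 'rV[R]_p -> R)
  (obs : seq Omega -> 'rV[R]_p) (beta_u gamma : R) :
  (* f : X x U -> X, locally Lipschitz *)
  (forall x u, Xcal x -> Ucal u -> Xcal (f x u)) ->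
  locally_lipschitz (Xcal `*` Ucal) f ->
  (* h : X x O -> R continuous *)
  {within Xcal `*` Ocal, continuous (fun z : 'rV[R]_n * 'rV[R]_p => h z.1 z.2)} ->
  (* obstacle states lie in O; h_{k+1} is a random variable *)
  (forall s, Ocal (obs s)) ->
  (forall x s, Xcal x -> measurable_fun [set: Omega] (fun w => h x (obs (w :: s)))) ->
  0 < beta_u < 1 -> 0 < gamma <= 1 ->
  (* h is a risk adaptive CVaR barrier function *)
  (forall (x : 'rV[R]_n) (s : seq Omega), exists b,
      is_adaptive_level P Ucal f h obs gamma beta_u b x s /\
      exists u : 'rV[R]_m,
        (((1 - gamma) * h x (obs s))%:E <= CVaR P b (h_next f h obs x u s))%E) ->
  (* every solution starting in S under controls u_k in U^k_{beta_k} *)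
  forall (x0 : 'rV[R]_n) (pol : seq Omega -> 'rV[R]_m),
    Xcal x0 -> 0 <= h x0 (obs [::]) ->
    (forall s, exists b,
        is_adaptive_level P Ucal f h obs gamma beta_u b (traj f pol x0 s) s /\
        U_beta P Ucal f h obs gamma b (traj f pol x0 s) s (pol s)) ->
    forall k : nat,
      (0%:E <= dyn_CVaR P beta_u k (fun s => h (traj f pol x0 s) (obs s)))%E.
Proof.
move=> fX _ _ _ h_meas /andP[beta_u_gt0 _] /andP[_ gamma_le1] _ x0 pol Xx0 h0
  pol_adaptive k.
have polU s : Ucal (pol s).
  by have [b [_ []]] := pol_adaptive s.
have Xtraj := traj_in fX polU Xx0.
apply: (@dyn_CVaR_ge0 _ _ _ _ _ (1 - gamma)) => //.
- exact: ltW.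
- by rewrite subr_ge0.
- by move=> s; exact: h_meas (fX _ _ (Xtraj s) (polU s)).
- move=> s; have [b [[/andP[b_gt0 b_le] _ _] [_ barrier]]] := pol_adaptive s.
  exact: le_trans barrier (le_CVaR_level P _ _ _ b_gt0 b_le).
Qed.
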